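(* Let $\mathcal{I}$ be a $\delta$-ONI instance with $n$ agents and run Algorithm $\mathtt{approxMMS1}(\mathcal{I},\delta)$. Let $i$ be any agent who did not receive any bag by the end of the algorithm. Then for all $k\in[n]$ with $v_i(B_k)\le1$, we have $v_i(\hat{B}_k)<1+\frac{4\delta}{3}$, where $\hat{B}_k\supseteq B_k$ is the $k$-th bag at the end of the algorithm.
   Context: Instance: agents $[n]$, goods $[m]$, additive valuations; goods with index larger than $m$ are dummy goods of value 0. Ordered: $v_i(1)\ge\dots\ge v_i(m)$ for all $i$. Normalized: every agent $i$ has a partition of the goods into $n$ bundles each of value exactly 1 to $i$ (so $\mathrm{MMS}_i=1$). $\alpha$-irreducible: for every agent $i$, $v_i(1)<\alpha$, $v_i(\{2n-1,2n,2n+1\})<\alpha$, $v_i(\{3n-2,\dots,3n+1\})<\alpha$, $v_i(\{1,2n+1\})<\alpha$. $\delta$-ONI: ordered, normalized, $(3/4+\delta)$-irreducible. $B_k=\{k,2n-k+1\}$; $N^1=\{i:v_i(B_k)\le1\ \forall k\}$; $N^1_1=\{i\in N^1:v_i(2n+1)\ge\frac14-5\delta\}$. Algorithm $\mathtt{approxMMS1}(\mathcal{I},\delta)$: $\alpha=3/4+\delta$, bags $B_1,\dots,B_n$. Phase 1: while some unassigned agent $i$ and unassigned bag $B$ have $v_i(B)\ge\alpha$, assign such $B$ to an agent valuing it at least $\alpha$, choosing an agent of $N^1_1$ whenever one qualifies. Phase 2: process remaining bags one by one; for the current bag $B$, while no unassigned agent values it at least $\alpha$, add to it an arbitrary unused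 good with index $>2n$; then assign $B$ to an unassigned agent valuing it at least $\alpha$ (preferring $N^1_1$). If a good must be added but none is left, the algorithm stops; the bags' contents at the end are $\hat{B}_k$. *)

(* Formalization of the algorithm approxMMS1 as a
   nondeterministic transition system; a "run" is any sequence of steps
   from the initial state, and "the end of the algorithm" is a reachable
   state in which no step applies. *)
From mathcomp Require Import all_boot all_order all_algebra.
Set Implicit Arguments. Unset Strict Implicit. Unset Printing Implicit Defensive.
Import Order.TTheory GRing.Theory Num.Theory.
Local Open Scope ring_scope.

(* Agents are 'I_n; goods are positive naturals 1, 2, ...; goods with
   index > m are dummy goods.  v i g is the value of good g for agent i. *)

Definition bval (R : numDomainType) (n : nat) (v : 'I_n -> nat -> R)
  (i : 'I_n) (S : seq nat) : R := \sum_(g <- S) v i g.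

(* initial bag B_k = {k, 2n-k+1}, for k in [n] (k : 'I_n stands for k.+1) *)
Definition init_bag (n : nat) (k : 'I_n) : seq nat := [:: k.+1; (2 * n - k)%N].

Definition goods_ok (R : numDomainType) (n m : nat) (v : 'I_n -> nat -> R) :=
  forall i g, 0 <= v i g /\ ((m < g)%N -> v i g = 0).

Definition ordered (R : numDomainType) (n m : nat) (v : 'I_n -> nat -> R) :=
  forall i g, (1 <= g < m)%N -> v i g.+1 <= v i g.

Definition normalized (R : numDomainType) (n m : nat) (v : 'I_n -> nat -> R) :=
  forall i, exists p : nat -> 'I_n,
    forall j : 'I_n, \sum_(1 <= g < m.+1 | p g == j) v i g = 1.

Definition irreducible (R : numDomainType) (n : nat) (v : 'I_n -> nat -> R)
  (alpha : R) :=
  forall i,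
    [/\ v i 1%N < alpha,
        bval v i [:: (2 * n - 1)%N; (2 * n)%N; (2 * n + 1)%N] < alpha,
        bval v i [:: (3 * n - 2)%N; (3 * n - 1)%N; (3 * n)%N; (3 * n + 1)%N] < alpha
      & bval v i [:: 1%N; (2 * n + 1)%N] < alpha].

Definition ONI (R : numFieldType) (n m : nat) (v : 'I_n -> nat -> R) (delta : R) :=
  [/\ goods_ok m v, ordered m v, normalized m v & irreducible v (3/4 + delta)].

Definition N1 (R : numDomainType) (n : nat) (v : 'I_n -> nat -> R) (i : 'I_n) :=
  forall k : 'I_n, bval v i (init_bag k) <= 1.

Definition N11 (R : numFieldType) (n : nat) (v : 'I_n -> nat -> R) (delta : R)
  (i : 'I_n) :=
  N1 v i /\ 1/4 - 5 * delta <= v i (2 * n + 1)%N.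

Record state (n : nat) := State {
  owner : 'I_n -> option 'I_n;   (* agent that received bag k, if any *)
  content : 'I_n -> seq nat;
  phase2 : bool;                 (* false = Phase 1, true = Phase 2 *)
  cur : option 'I_n              (* bag currently processed in Phase 2 *)
}.

Definition init_state (n : nat) : state n :=
  State (fun _ => None) (@init_bag n) false None.

Definition agent_free n (s : state n) (a : 'I_n) := forall k, owner s k <> Some a.
Definition bag_free n (s : state n) (k : 'I_n) := owner s k = None.

Definition assign n (s : state n) (k a : 'I_n) : 'I_n -> option 'I_n :=
  fun k' => if k' == k then Some a else owner s k'.

Section Step.
Variables (R : numFieldType) (n m : nat) (v : 'I_n -> nat -> R) (delta : R).
Let alpha : R := 3/4 + delta.

Definition qualifies (s : state n) (a k : 'I_n) :=
  agent_free s a /\ alpha <= bval v a (content s k).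

Definition good_pick (s : state n) (a k : 'I_n) :=
  qualifies s a k /\
  ((exists a', qualifies s a' k /\ N11 v delta a') -> N11 v delta a).

Inductive step : state n -> state n -> Prop :=
| P1_assign s k a :
    phase2 s = false -> bag_free s k -> good_pick s a k ->
    step s (State (assign s k a) (content s) false None)
| P1_end s :
    phase2 s = false ->
    ~ (exists k a, bag_free s k /\ qualifies s a k) ->
    step s (State (owner s) (content s) true None)
| P2_select s k :
    phase2 s = true -> cur s = None -> bag_free s k ->
    step s (State (owner s) (content s) true (Some k))
| P2_add s k g :
    phase2 s = true -> cur s = Some k ->
    (forall a, ~ qualifies s a k) ->
    (2 * n < g <= m)%N -> (forall k', g \notin content s k') ->
    step s (State (owner s)
                  (fun k' => if k' == k then rcons (content s k) g
                             else content s k')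
                  true (Some k))
| P2_assign s k a :
    phase2 s = true -> cur s = Some k -> good_pick s a k ->
    step s (State (assign s k a) (content s) true None).

Inductive reach : state n -> Prop :=
| reach_init : reach (init_state n)
| reach_step s s' : reach s -> step s s' -> reach s'.

Definition final (s : state n) := reach s /\ ~ (exists s', step s s').

End Step.

(* A bag only grows in Phase 2, while no unassigned agent values it at least
   alpha = 3/4 + delta, and only by a good of index g > 2n.  Agents never lose
   their bags, so an agent i still unassigned at the end was unassigned at every
   such growth step: each final bag is either its initial bag or c ++ [g] with
   v_i(c) < alpha.  By ordering, 3 v_i(g) <= v_i({2n-1, 2n, 2n+1}) < alpha, so
   v_i(c ++ [g]) < 4 alpha / 3 = 1 + 4 delta / 3. *)
From mathcomp Require Import all_boot all_order all_algebra.
From mathcomp Require Import zify lra.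
Import Order.TTheory GRing.Theory Num.Theory.
Local Open Scope ring_scope.
Set Implicit Arguments. Unset Strict Implicit.

Lemma bval_rcons (R : numDomainType) n (v : 'I_n -> nat -> R) i c g :
  bval v i (rcons c g) = bval v i c + v i g.
Proof. by rewrite /bval -cats1 big_cat big_seq1. Qed.

Lemma bval_triple (R : numDomainType) n (v : 'I_n -> nat -> R) i a b c :
  bval v i [:: a; b; c] = v i a + v i b + v i c.
Proof. by rewrite /bval !big_cons big_nil addr0 addrA. Qed.

Lemma ordered_le (R : numDomainType) n m (v : 'I_n -> nat -> R) i b g :
  ordered m v -> (1 <= b <= g)%N -> (g <= m)%N -> v i g <= v i b.
Proof.
move=> ord_v /andP[b_ge1]; elim: g => [|g IHg]; first by lia.
rewrite leq_eqVlt => /predU1P[<- //|lt_bg] g_le_m.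
by apply: le_trans (IHg _ _); [apply: ord_v|..]; lia.
Qed.

Lemma late_good_small (R : realFieldType) n m (v : 'I_n -> nat -> R) alpha i g :
  ordered m v -> irreducible v alpha -> (0 < n)%N -> (2 * n < g <= m)%N ->
  3 * v i g < alpha.
Proof.
move=> ord_v irr_v n_gt0 /andP[g_gt g_le].
have [_ + _ _] := irr_v i; rewrite bval_triple => small3.
have le1 : v i g <= v i (2 * n - 1)%N by apply: ordered_le ord_v _ g_le; lia.
have le2 : v i g <= v i (2 * n)%N by apply: ordered_le ord_v _ g_le; lia.
have le3 : v i g <= v i (2 * n + 1)%N by apply: ordered_le ord_v _ g_le; lia.
lra.
Qed.

Section Invariants.
Variables (R : realFieldType) (n m : nat) (v : 'I_n -> nat -> R) (delta : R).

Lemma agent_free_assign (s : state n) k a b x y : bag_free s k ->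
  agent_free (State (assign s k a) (content s) x y) b -> agent_free s b.
Proof.
move=> free_k free_b k'; have := free_b k'; rewrite /= /assign.
by case: eqP => [->|//]; rewrite free_k.
Qed.

Lemma reach_cur_free s : reach m v delta s -> forall k, cur s = Some k -> bag_free s k.
Proof.
elim=> // {}s s' _ IH step_s; case: step_s IH => //= {}s k.
- by move=> _ _ free_k _ k' [<-].
- by move=> g _ cur_k _ _ _ IH k' [<-]; apply: IH.
Qed.

Definition grown_bag (a : 'I_n) (S : seq nat) :=
  exists c g, [/\ S = rcons c g, bval v a c < 3/4 + delta & (2 * n < g <= m)%N].

Lemma reach_content s : reach m v delta s ->
  forall k a, agent_free s a -> content s k = init_bag k \/ grown_bag a (content s k).
Proof.
elim=> [k a _|{}s s' reach_s IH step_s]; first by left.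
case: step_s reach_s IH => {}s.
- by move=> k a _ free_k _ _ IH k' b /(agent_free_assign free_k); apply: IH.
- by move=> _ _ _ IH k' b; apply: IH.
- by move=> k _ _ _ _ IH k' b; apply: IH.
- move=> k g _ _ not_qual g_range _ _ IH k' b free_b /=.
  case: eqP => [->|_]; last exact: IH.
  right; exists (content s k), g; split=> //.
  by rewrite ltNge; apply/negP => le_b; apply: (not_qual b).
- move=> k a _ cur_k _ reach_s IH k' b.
  by move/(agent_free_assign (reach_cur_free reach_s cur_k)); apply: IH.
Qed.

End Invariants.

Theorem lemma21 (R : realFieldType) (n m : nat) (v : 'I_n -> nat -> R)
  (delta : R) :
  0 < delta -> ONI m v delta ->
  forall s : state n, final m v delta s ->
  forall i : 'I_n, agent_free s i ->
  forall k : 'I_n, bval v i (init_bag k) <= 1 ->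
  bval v i (content s k) < 1 + 4 * delta / 3.
Proof.
move=> delta_gt0 [_ ord_v _ irr_v] s [reach_s _] i free_i k init_le1.
have n_gt0 : (0 < n)%N by apply: leq_ltn_trans (ltn_ord k).
case: (reach_content reach_s k free_i) => [->|[c [g [-> c_small g_range]]]].
  by apply: le_lt_trans init_le1 _; lra.
have g_small := late_good_small i ord_v irr_v n_gt0 g_range.
rewrite bval_rcons; lra.
Qed.
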